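(* Let $C\subset\mathbb{R}$ be a Cantor set with Newhouse thickness $\tau(C)>1$, and let $\alpha>1$. For $\beta>0$ and $\mathbf{t}\in\mathbb{R}^2$ let $$\Delta^{(\beta)}_{\mathbf{t}}(C\times C)=\{\|\mathbf{c}-\mathbf{t}\|_\beta:\mathbf{c}\in C\times C\},\qquad \|(x,y)\|_\beta=(|x|^\beta+|y|^\beta)^{1/\beta}.$$ Then for every $\mathbf{t}\in\mathbb{R}^2$ the set $\Delta^{(\alpha)}_{\mathbf{t}}(C\times C)$ has non-empty interior. Moreover there exists a non-empty open interval $I$ centered at $\alpha$ such that $\big(\bigcap_{\beta\in I}\Delta^{(\beta)}_{\mathbf{t}}(C\times C)\big)^{\circ}\neq\emptyset$.
   Context: A Cantor set is a non-empty compact, perfect, totally disconnected subset of $\mathbb{R}$. Newhouse thickness: gaps of a Cantor set $K$ are the bounded connected components of $\mathbb{R}\setminus K$; for $u$ the right endpoint of a gap $G$, the bridge is $B(u)=(u,\ell(\widetilde G))$ where $\widetilde G$ is the first gap to the right of $u$ with $|\widetilde G|\ge|G|$ and $\ell(\widetilde G)$ its left endpoint (if none exists, the bridge extends to $\max K$), symmetrically at left endpoints; $\tau(K)=\inf_u|B(u)|/|G|$ over all gap endpoints $u$. *)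

From HB Require Import structures.
From mathcomp Require Import all_boot all_order all_algebra.
From mathcomp Require Import all_classical all_reals all_analysis.
Set Implicit Arguments. Unset Strict Implicit. Unset Printing Implicit Defensive.
Import Order.TTheory GRing.Theory Num.Theory numFieldNormedType.Exports.
Local Open Scope classical_set_scope.
Local Open Scope ring_scope.

Definition is_cantor_set {R : realType} (K : set R) : Prop :=
  [/\ K !=set0, compact K, perfect_set K & totally_disconnected K].

(* (a,b) is a gap of K: a bounded connected component of R \ K.  For a
   closed K these are exactly the open intervals (a,b), a < b, with both
   endpoints in K and no point of K strictly between them. *)
Definition is_gap {R : realType} (K : set R) (a b : R) : Prop :=
  [/\ a < b, K a, K b & forall x, a < x < b -> ~ K x].

(* Length of the bridge at the right endpoint b of the gap (a,b):
   distance from b to the left endpoint of the first gap to the right of b of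
   length >= b - a, or to max K (= sup K) if there is none. *)
Definition right_bridge {R : realType} (K : set R) (a b : R) : R :=
  inf ([set l - b | l in [set l | exists r, is_gap K l r /\ b <= l /\ b - a <= r - l]]
       `|` [set sup K - b]).

Definition left_bridge {R : realType} (K : set R) (a b : R) : R :=
  a - sup ([set r | exists l, is_gap K l r /\ r <= a /\ b - a <= r - l]
           `|` [set inf K]).

Definition thickness {R : realType} (K : set R) : R :=
  inf [set x | exists a b, is_gap K a b /\
         (x = right_bridge K a b / (b - a) \/ x = left_bridge K a b / (b - a))].

Definition beta_norm {R : realType} (beta : R) (v : R * R) : R :=
  ((`|v.1| `^ beta) + (`|v.2| `^ beta)) `^ (beta^-1).

Definition pinned_dist_set {R : realType} (beta : R) (C : set R) (t : R * R) : set R :=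
  [set beta_norm beta (c.1 - t.1, c.2 - t.2) | c in C `*` C].

From HB Require Import structures.
From mathcomp Require Import all_boot all_order all_algebra.
From mathcomp Require Import all_classical all_reals all_analysis.
From mathcomp Require Import lra ring.
Import Order.TTheory GRing.Theory Num.Theory numFieldNormedType.Exports.
Local Open Scope classical_set_scope.
Local Open Scope ring_scope.

(* Newhouse's gap lemma: two interleaved compact sets K1, K2 whose thicknesses satisfy
   t1 t2 >= 1 intersect.  Otherwise any pair of interleaved gaps could be replaced by
   another such pair of strictly smaller total length, forever; but interleaved gaps
   are longer than the distance between K1 and K2, and only finitely many gaps are.

   Near any point of C far from t_i, C has a small piece whose distances to t_i form a
   compact set K_i of thickness at least tau(C) relative to its hull [p_i, q_i], with
   q_i <= rho p_i and rho^alpha = tau(C).  As x |-> x^beta distorts ratios of lengths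
   inside [p_i, q_i] by at most rho^(beta - 1) <= tau(C) for beta <= alpha + 1, both
   K_1^beta and u - K_2^beta have thickness at least 1; they are interleaved for u in an
   interval that moves continuously with beta, so x^beta + y^beta = r^beta is solvable
   in K_1 x K_2 for all r in a fixed interval and all beta close to alpha. *)

Set Implicit Arguments.
Unset Strict Implicit.
Unset Printing Implicit Defensive.

Section Gaps.
Variable R : realType.
Implicit Types (K : set R) (a b c d l r x y w : R).

Lemma closed_sup_mem (A : set R) : A !=set0 -> closed A -> has_ubound A -> A (sup A).
Proof.
move=> A0 cA ubA; apply: (itv_closed_supremums A0 cA); split; first exact: ub_le_sup.
by move=> y; apply: ge_sup.
Qed.

Lemma closed_inf_mem (A : set R) : A !=set0 -> closed A -> has_lbound A -> A (inf A).
Proof.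
move=> A0 cA lbA; apply: (itv_closed_infimums A0 cA); split; first exact: ge_inf.
by move=> y; apply: lb_le_inf.
Qed.

Lemma exists_gap_around K x y w : closed K -> K x -> K y -> x < w < y -> ~ K w ->
  exists a b, [/\ is_gap K a b, x <= a, a < w, w < b & b <= y].
Proof.
move=> cK Kx Ky /andP[xw wy] nKw.
pose A := K `&` `[x, w]; pose B := K `&` `[w, y].
have cA : closed A by apply: closedI => //; exact: itv_closed.
have cB : closed B by apply: closedI => //; exact: itv_closed.
have A0 : A !=set0 by exists x; split; rewrite //= in_itv /= lexx ltW.
have B0 : B !=set0 by exists y; split; rewrite //= in_itv /= lexx ltW.
have ubA : has_ubound A by exists w => z [_]; rewrite /= in_itv => /andP[].
have lbB : has_lbound B by exists w => z [_]; rewrite /= in_itv => /andP[].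
have [KsA] := closed_sup_mem A0 cA ubA; rewrite /= in_itv /= => /andP[xa aw].
have [KiB] := closed_inf_mem B0 cB lbB; rewrite /= in_itv /= => /andP[wb b_y].
have aw' : sup A < w by rewrite lt_neqAle aw andbT; apply: contraPneq nKw => <-.
have wb' : w < inf B by rewrite lt_neqAle wb andbT; apply: contraPneq nKw => ->.
exists (sup A), (inf B); split => //; split => //; first exact: lt_trans wb'.
move=> z /andP[az zb] Kz; have [zw|wz] := leP z w.
- have : z <= sup A.
    by apply: ub_le_sup => //; split; rewrite //= in_itv /= zw (le_trans xa (ltW az)).
  by rewrite leNgt az.
- have : inf B <= z.
    by apply: ge_inf => //; split; rewrite //= in_itv /= (ltW wz) (le_trans (ltW zb) b_y).
  by rewrite leNgt zb.
Qed.

Lemma gap_lt K a b : is_gap K a b -> a < b. Proof. by case. Qed.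
Lemma gap_memL K a b : is_gap K a b -> K a. Proof. by case. Qed.
Lemma gap_memR K a b : is_gap K a b -> K b. Proof. by case. Qed.

Lemma gap_disjoint K a b l r : is_gap K a b -> is_gap K l r -> a < l -> b <= l.
Proof.
move=> [_ _ _ nK] [_ Kl _ _] al; rewrite leNgt; apply/negP => lb.
by apply: (nK l); rewrite ?al.
Qed.

Lemma gap_eq K a b l r : is_gap K a b -> is_gap K l r ->
  `|a - l| < b - a -> `|a - l| < r - l -> a = l /\ b = r.
Proof.
move=> gab glr; rewrite !ltr_norml => /andP[h1 h2] /andP[h3 h4].
have al : a = l.
  have [al|la|//] := ltgtP a l.
  - by have := gap_disjoint gab glr al; lra.
  - by have := gap_disjoint glr gab la; lra.
subst l; split => //; case: gab glr => [ab Ka Kb nK] [ar _ Kr nK'].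
have [br|rb|//] := ltgtP b r.
- by case: (nK' b); rewrite ?ab.
- by case: (nK r); rewrite ?ar.
Qed.

Lemma gap_restrict K p q a b : is_gap (K `&` `[p, q]) a b -> [/\ is_gap K a b, p <= a & b <= q].
Proof.
move=> [ab [Ka]]; rewrite /= in_itv /= => /andP[pa _] [Kb]; rewrite /= in_itv /= => /andP[_ bq] nK.
split => //; split => // z /andP[az zb] Kz; apply: (nK z); first by rewrite az.
by split; rewrite //= in_itv /= (le_trans pa (ltW az)) (le_trans (ltW zb) bq).
Qed.

Lemma gap_opp K a b : is_gap [set - x | x in K] a b -> is_gap K (- b) (- a).
Proof.
move=> [ab [x Kx xa] [y Ky yb] nK]; subst a b; rewrite !opprK.
split => //; first by rewrite -ltrN2.
move=> z /andP[yz zx] Kz.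
by apply: (nK (- z)); [rewrite !ltrN2 yz zx | exists z].
Qed.

End Gaps.

Section Thick.
Variable R : realType.
Implicit Types (K A B : set R) (a b c d l r x y e : R).

Definition gaps_separated K tau := forall a b l r x, is_gap K a b -> is_gap K l r ->
  b <= l -> x <= b - a -> x <= r - l -> tau * x <= l - b.

(* For compact K with convex hull [p, q], [thick K p q tau] says that the Newhouse
   thickness of K is at least tau: the bridge of a gap G reaches either the nearest
   gap at least as long as G, or the end p or q of the hull. *)
Record thick K p q tau : Prop := Thick {
  thick_compact : compact K;
  thick_min : K p;
  thick_max : K q;
  thick_hull : K `<=` `[p, q];
  thick_gaps : gaps_separated K tau;
  thick_bridge_min : forall a b, is_gap K a b -> tau * (b - a) <= a - p;
  thick_bridge_max : forall a b, is_gap K a b -> tau * (b - a) <= q - b }.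

Lemma thick_closed K p q tau : thick K p q tau -> closed K.
Proof. by move/thick_compact; apply: compact_closed; exact: Rhausdorff. Qed.

Lemma thick_gap_right A p q tau a b d : thick A p q tau -> is_gap A a b -> b < d -> ~ A d ->
  (exists l r, [/\ is_gap A l r, b <= l, l < d, d < r & r - l < b - a]) \/
  tau * (b - a) <= d - b.
Proof.
move=> thA gab bd nAd; have [_ _ Ab _] := gab.
have [dq|qd] := ltP d q; last by right; have := thick_bridge_max thA gab; lra.
have [l [r [glr bl ld dr _]]] :=
  exists_gap_around (thick_closed thA) Ab (thick_max thA) (introT andP (conj bd dq)) nAd.
have [short|long] := ltP (r - l) (b - a); first by left; exists l, r.
by right; have := thick_gaps thA gab glr bl (lexx _) long; lra.
Qed.

Lemma thick_gap_left A p q tau a b c : thick A p q tau -> is_gap A a b -> c < a -> ~ A c ->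
  (exists l r, [/\ is_gap A l r, l < c, c < r, r <= a & r - l < b - a]) \/
  tau * (b - a) <= a - c.
Proof.
move=> thA gab ca nAc; have [_ Aa _ _] := gab.
have [pc|cp] := ltP p c; last by right; have := thick_bridge_min thA gab; lra.
have [l [r [glr pl lc cr ra]]] :=
  exists_gap_around (thick_closed thA) (thick_min thA) Aa (introT andP (conj pc ca)) nAc.
have [short|long] := ltP (r - l) (b - a); first by left; exists l, r.
by right; have := thick_gaps thA glr gab ra long (lexx _); lra.
Qed.

Definition linked K1 K2 (u v : R * R) : Prop :=
  [/\ is_gap K1 u.1 u.2, is_gap K2 v.1 v.2 &
      [&& u.1 < v.1, v.1 < u.2 & u.2 < v.2] || [&& v.1 < u.1, u.1 < v.2 & v.2 < u.2]].

Lemma linked_sym K1 K2 u v : linked K1 K2 u v -> linked K2 K1 v u.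
Proof. by case=> g1 g2 o; split; rewrite // orbC. Qed.

Definition linked_length (u v : R * R) := (u.2 - u.1) + (v.2 - v.1).

Section Shrink.
Variables (K1 K2 : set R) (p1 q1 p2 q2 t1 t2 : R).
Hypotheses (thK1 : thick K1 p1 q1 t1) (thK2 : thick K2 p2 q2 t2).
Hypotheses (t1_gt0 : 0 < t1) (t1t2_ge1 : 1 <= t1 * t2).
Hypothesis K1K2 : K1 `&` K2 = set0.

Lemma interleaved_gaps_shrink a b c d : is_gap K1 a b -> is_gap K2 c d ->
  a < c -> c < b -> b < d ->
  exists u v, linked K1 K2 u v /\ linked_length u v < linked_length (a, b) (c, d).
Proof.
move=> gab gcd ac cb bd; have [_ Ka _ _] := gab; have [cd _ Kd _] := gcd.
have nK1d : ~ K1 d by move=> K1d; move/disjoints_subset: K1K2 => /(_ _ K1d); apply.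
have nK2a : ~ K2 a by move/disjoints_subset: K1K2 => /(_ _ Ka).
case: (thick_gap_right thK1 gab bd nK1d) => [[l [r [glr bl ld dr short]]]|far1].
  exists (l, r), (c, d); split; last by rewrite /linked_length /=; lra.
  by split => //=; apply/orP; right; apply/and3P; split; lra.
case: (thick_gap_left thK2 gcd ac nK2a) => [[l [r [glr la ar rc short]]]|far2].
  exists (a, b), (l, r); split; last by rewrite /linked_length /=; lra.
  by split => //=; apply/orP; right; apply/and3P; split; lra.
(* neither gap can be replaced: t1 |G1| < |G2| and t2 |G2| < |G1| contradict t1 t2 >= 1 *)
have h1 : t1 * (b - a) < d - c by lra.
have h2 : t1 * (t2 * (d - c)) < t1 * (b - a) by rewrite ltr_pM2l //; lra.
have : 1 * (d - c) <= t1 * t2 * (d - c) by rewrite ler_pM2r ?subr_gt0.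
lra.
Qed.

End Shrink.

Lemma linked_shrink K1 K2 p1 q1 p2 q2 t1 t2 u v :
  thick K1 p1 q1 t1 -> thick K2 p2 q2 t2 -> 0 < t1 -> 0 < t2 -> 1 <= t1 * t2 ->
  K1 `&` K2 = set0 -> linked K1 K2 u v ->
  exists u' v', linked K1 K2 u' v' /\ linked_length u' v' < linked_length u v.
Proof.
move: u v => [a b] [c d] thK1 thK2 t10 t20 t12 K12 [/= g1 g2 /orP[]] /and3P[h1 h2 h3].
  exact: (interleaved_gaps_shrink thK1 thK2 t10 t12 K12 g1 g2 h1 h2 h3).
have K21 : K2 `&` K1 = set0 by rewrite setIC.
have t21 : 1 <= t2 * t1 by rewrite mulrC.
have [v' [u' [/linked_sym l' lt']]] :=
  interleaved_gaps_shrink thK2 thK1 t20 t21 K21 g2 g1 h1 h2 h3.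
by exists u', v'; split => //; move: lt'; rewrite /linked_length /=; lra.
Qed.

End Thick.

Section NewhouseGapLemma.
Variable R : realType.
Implicit Types (K A B : set R) (a b c d l r x y e : R).

Lemma disjoint_compact_dist_gt0 A B : compact A -> compact B -> A `&` B = set0 ->
  exists2 e, 0 < e & forall x y, A x -> B y -> e <= `|x - y|.
Proof.
move=> cA cB AB; pose D := [set z.1 - z.2 | z in A `*` B].
have cD : compact D.
  apply: continuous_compact; last exact: compact_setX.
  apply: continuous_subspaceT => z.
  by apply: (@continuousB _ _ _ (fun z : R * R => z.1) (fun z : R * R => z.2));
    [exact: cvg_fst | exact: cvg_snd].
have D0 : ~ D 0.
  case=> -[x y] [Ax By] /= /eqP; rewrite subr_eq0 => /eqP xy.
  by have /disjoints_subset/(_ x Ax) := AB; rewrite xy.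
have : nbhs (0 : R) (~` D).
  by apply: open_nbhs_nbhs; split => //; rewrite openC; exact: compact_closed.
move/nbhs_ballP => [e /= e0 De]; exists e => // x y Ax By.
rewrite leNgt; apply/negP => xy; apply: (De (x - y)); last by exists (x, y).
by rewrite /ball /= sub0r normrN.
Qed.

Lemma linked_gaps_long K1 K2 e u v : (forall x y, K1 x -> K2 y -> e <= `|x - y|) ->
  linked K1 K2 u v -> e < u.2 - u.1 /\ e < v.2 - v.1.
Proof.
move=> Ke [[_ Ku1 Ku2 _] [_ Kv1 Kv2 _] /orP[]/and3P[h1 h2 h3]].
- by have := Ke _ _ Ku2 Kv1; rewrite gtr0_norm ?subr_gt0 //; lra.
- by have := Ke _ _ Ku1 Kv2; rewrite ltr0_norm ?subr_lt0 //; lra.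
Qed.

Lemma interval_cells lo hi e : 0 < e -> exists n (cell : R -> 'I_n),
  forall x y, lo <= x <= hi -> lo <= y <= hi -> cell x = cell y -> `|x - y| < e.
Proof.
move=> e0; pose k x := Num.truncn ((x - lo) / e).
have k_lt x : lo <= x <= hi -> (k x < (k hi).+1)%N.
  move=> /andP[lx xh]; rewrite ltnS; apply: le_truncn.
  by apply: ler_wpM2r; [rewrite invr_ge0 ltW | rewrite lerD2r].
exists (k hi).+1, (fun x => inord (k x)); move=> x y hx hy /(congr1 val) /=.
rewrite !inordK ?k_lt // => kxy.
have [lx _] := andP hx; have [ly _] := andP hy.
have /truncn_itv : 0 <= (x - lo) / e by apply: divr_ge0; rewrite ?subr_ge0 // ltW.
have /truncn_itv : 0 <= (y - lo) / e by apply: divr_ge0; rewrite ?subr_ge0 // ltW.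
rewrite -/(k x) -/(k y) kxy -natr1 => /andP[y1 y2] /andP[x1 x2].
have : `|(x - lo) / e - (y - lo) / e| < 1 by rewrite ltr_norml; apply/andP; split; lra.
rewrite -mulrBl (_ : x - lo - (y - lo) = x - y); last by ring.
by rewrite normrM [`|e^-1|]gtr0_norm ?invr_gt0 // ltr_pdivrMr // mul1r.
Qed.

Lemma no_infinite_descent (S : Type) (T : finType) (P : S -> Prop) (f : S -> R)
    (code : S -> T) :
  (forall s s', P s -> P s' -> code s = code s' -> s = s') ->
  (forall s, P s -> exists s', P s' /\ f s' < f s) -> forall s, ~ P s.
Proof.
move=> code_inj descent s0 Ps0.
have [next f_next] : {next : {s | P s} -> {s | P s} &
    forall s, f (sval (next s)) < f (sval s)}.
  apply: (@choice _ _ (fun s s' : {s | P s} => f (sval s') < f (sval s))) => -[s Ps].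
  have [s' [Ps' lt_s's]] := descent s Ps.
  by exists (exist _ s' Ps').
pose orbit n := sval (iter n next (exist _ s0 Ps0)).
have orbit_decr i j : (i < j)%N -> f (orbit j) < f (orbit i).
  move=> /subnK <-; elim: (j - i.+1)%N => [|k IH]; first by rewrite add0n; exact: f_next.
  by rewrite addSn; apply: lt_trans IH; exact: f_next.
have orbit_inj : injective (fun i : 'I_#|T|.+1 => code (orbit i)).
  move=> i j /(code_inj _ _ (svalP _) (svalP _)) orbit_ij; apply/val_inj.
  by case: (ltngtP i j) => // /orbit_decr; rewrite orbit_ij ltxx.
by have := leq_card _ orbit_inj; rewrite card_ord ltnn.
Qed.

Theorem gap_lemma K1 K2 p1 q1 p2 q2 t1 t2 :
  thick K1 p1 q1 t1 -> thick K2 p2 q2 t2 -> 0 < t1 -> 0 < t2 -> 1 <= t1 * t2 ->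
  p1 < p2 -> p2 < q1 -> q1 < q2 -> K1 `&` K2 !=set0.
Proof.
move=> thK1 thK2 t10 t20 t12 p12 p2q1 q12; apply/set0P/eqP => K12.
have [e e0 Ke] := disjoint_compact_dist_gt0 (thick_compact thK1) (thick_compact thK2) K12.
have [n [cell cellP]] := interval_cells p1 q2 e0.
have hull1 x : K1 x -> p1 <= x <= q2.
  by move/(thick_hull thK1); rewrite /= in_itv /= => /andP[-> /le_trans ->] //; exact: ltW.
have hull2 x : K2 x -> p1 <= x <= q2.
  by move/(thick_hull thK2); rewrite /= in_itv /= => /andP[/(le_trans (ltW p12)) -> ->].
have nK1p2 : ~ K1 p2.
  by move=> K1p2; move/disjoints_subset: K12 => /(_ _ K1p2); apply; exact: thick_min thK2.
have [a [b [gab p1a ap2 p2b bq1]]] := exists_gap_around (thick_closed thK1)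
  (thick_min thK1) (thick_max thK1) (introT andP (conj p12 p2q1)) nK1p2.
have nK2b : ~ K2 b by have [_ _ K1b _] := gab; move/disjoints_subset: K12 => /(_ _ K1b).
have [c [d [gcd p2c cb bd dq2]]] := exists_gap_around (thick_closed thK2)
  (thick_min thK2) (thick_max thK2) (introT andP (conj p2b (le_lt_trans bq1 q12))) nK2b.
have start : linked K1 K2 (a, b) (c, d).
  by split => //=; apply/orP; left; apply/and3P; split; lra.
apply: (no_infinite_descent (P := fun s => linked K1 K2 s.1 s.2)
  (f := fun s => linked_length s.1 s.2) (code := fun s => (cell s.1.1, cell s.2.1)))
  _ _ ((a, b), (c, d)) start.
- move=> [[a1 b1] [c1 d1]] [[a2 b2] [c2 d2]] /= l1 l2 [cell_a cell_c].
  have [e_ab1 e_cd1] := linked_gaps_long Ke l1; have [e_ab2 e_cd2] := linked_gaps_long Ke l2.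
  case: l1 l2 => [/= g1 h1 _] [/= g2 h2 _].
  have [_ Ka1 _ _] := g1; have [_ Ka2 _ _] := g2; have [_ Kc1 _ _] := h1; have [_ Kc2 _ _] := h2.
  have d_a := cellP _ _ (hull1 _ Ka1) (hull1 _ Ka2) cell_a.
  have d_c := cellP _ _ (hull2 _ Kc1) (hull2 _ Kc2) cell_c.
  have [-> ->] := gap_eq g1 g2 (lt_trans d_a e_ab1) (lt_trans d_a e_ab2).
  by have [-> ->] := gap_eq h1 h2 (lt_trans d_c e_cd1) (lt_trans d_c e_cd2).
- move=> [u v] /= /(linked_shrink thK1 thK2 t10 t20 t12 K12) [u' [v' shrink]].
  by exists (u', v').
Qed.

End NewhouseGapLemma.

Section ThickImages.
Variable R : realType.
Implicit Types (K : set R) (a b c d l r p q x y tau beta : R).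

Lemma thick_bounds K p q tau x : thick K p q tau -> K x -> p <= x <= q.
Proof. by move=> thK /(thick_hull thK); rewrite /= in_itv. Qed.

Lemma compact_image K (phi : R -> R) : compact K ->
  (forall x, K x -> {for x, continuous phi}) -> compact [set phi x | x in K].
Proof.
move=> cK phi_cont; apply: continuous_compact => //; apply: continuous_in_subspaceT => x.
by rewrite inE => Kx; apply: phi_cont.
Qed.

Lemma gap_image K p q (phi : R -> R) c d : K `<=` `[p, q] ->
  (forall u v, p <= u -> u < v -> v <= q -> phi u < phi v) ->
  is_gap [set phi x | x in K] c d -> exists a b, [/\ is_gap K a b, c = phi a & d = phi b].
Proof.
move=> Kpq incr [cd [a Ka ac] [b Kb bd] nK]; subst c d.
have hull x : K x -> p <= x <= q by move/Kpq; rewrite /= in_itv.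
have [/andP[pa aq] /andP[pb bq]] := (hull a Ka, hull b Kb).
have ab : a < b.
  rewrite ltNge le_eqVlt; apply/negP => /orP[/eqP ba|ba]; move: cd; first by rewrite ba ltxx.
  by move/(lt_trans (incr _ _ pb ba aq)); rewrite ltxx.
exists a, b; split => //; split => // w /andP[aw wb] Kw.
apply: (nK (phi w)); last by exists w.
by rewrite !incr // ?(le_trans pa (ltW aw)) ?(le_trans (ltW wb) bq).
Qed.

Section Image.
Variables (K : set R) (p q tau m M : R) (phi : R -> R).
Hypotheses (thK : thick K p q tau) (tau0 : 0 < tau) (m0 : 0 < m) (mM : m <= M).
Hypothesis lip : forall u v, p <= u -> u <= v -> v <= q ->
  m * (v - u) <= phi v - phi u /\ phi v - phi u <= M * (v - u).

Let M0 : 0 < M := lt_le_trans m0 mM.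

Lemma lipschitz_incr u v : p <= u -> u < v -> v <= q -> phi u < phi v.
Proof.
move=> pu uv vq; have [+ _] := lip pu (ltW uv) vq.
by rewrite -subr_gt0; apply: lt_le_trans; rewrite mulr_gt0 ?subr_gt0.
Qed.

Lemma image_gap_short a b z : is_gap K a b -> z <= phi b - phi a -> z / M <= b - a.
Proof.
move=> gab zab; have /andP[pa _] := thick_bounds thK (gap_memL gab).
have /andP[_ bq] := thick_bounds thK (gap_memR gab).
have [_ Lab] := lip pa (ltW (gap_lt gab)) bq.
by rewrite ler_pdivrMr // mulrC; exact: le_trans Lab.
Qed.

Lemma image_scaled_le z u v : p <= u -> u <= v -> v <= q ->
  tau * (z / M) <= v - u -> tau * m / M * z <= phi v - phi u.
Proof.
move=> pu uv vq le_uv; have [+ _] := lip pu uv vq; apply: le_trans.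
by rewrite (_ : tau * m / M * z = m * (tau * (z / M))) ?ler_pM2l //; ring.
Qed.

Lemma thick_image : (forall x, K x -> {for x, continuous phi}) ->
  thick [set phi x | x in K] (phi p) (phi q) (tau * m / M).
Proof.
move=> phi_cont; have gap_pre := gap_image (thick_hull thK) lipschitz_incr.
have [/andP[pp pq] /andP[_ qq]] := (thick_bounds thK (thick_min thK), thick_bounds thK (thick_max thK)).
have mono x y : p <= x -> x <= y -> y <= q -> phi x <= phi y.
  by move=> px; rewrite le_eqVlt => /predU1P[-> //|xy] yq; exact/ltW/lipschitz_incr.
split.
- exact: compact_image (thick_compact thK) phi_cont.
- by exists p => //; exact: thick_min thK.
- by exists q => //; exact: thick_max thK.
- move=> _ [x Kx <-]; have /andP[px xq] := thick_bounds thK Kx.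
  by rewrite /= in_itv /= !mono.
- move=> _ _ _ _ z /gap_pre [a [b [gab -> ->]]] /gap_pre [l [r [glr -> ->]]] bl zab zlr.
  have /andP[pb bq] := thick_bounds thK (gap_memR gab).
  have /andP[pl lq] := thick_bounds thK (gap_memL glr).
  have b_l : b <= l by rewrite leNgt; apply/negP => lb; move: bl; rewrite leNgt (lipschitz_incr _ lb).
  apply: image_scaled_le => //; apply: (thick_gaps thK gab glr b_l).
  + exact: image_gap_short gab zab.
  + exact: image_gap_short glr zlr.
- move=> _ _ /gap_pre [a [b [gab -> ->]]]; have /andP[pa aq] := thick_bounds thK (gap_memL gab).
  apply: image_scaled_le => //; apply: le_trans (thick_bridge_min thK gab).
  by rewrite ler_pM2l //; exact: image_gap_short gab (lexx _).
- move=> _ _ /gap_pre [a [b [gab -> ->]]]; have /andP[pb bq] := thick_bounds thK (gap_memR gab).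
  apply: image_scaled_le => //; apply: le_trans (thick_bridge_max thK gab).
  by rewrite ler_pM2l //; exact: image_gap_short gab (lexx _).
Qed.

End Image.

Lemma thick_opp K p q tau : thick K p q tau -> thick [set - x | x in K] (- q) (- p) tau.
Proof.
move=> thK; split.
- by apply: compact_image (thick_compact thK) _ => x _; exact: opp_continuous.
- by exists q => //; exact: thick_max thK.
- by exists p => //; exact: thick_min thK.
- move=> _ [x Kx <-]; have /andP[px xq] := thick_bounds thK Kx.
  by rewrite /= in_itv /= !lerN2 xq px.
- move=> a b l r x /gap_opp gab /gap_opp glr bl xab xlr.
  by apply: le_trans (thick_gaps thK glr gab _ _ _) _; lra.
- by move=> a b /gap_opp gab; have := thick_bridge_max thK gab; lra.
- by move=> a b /gap_opp gab; have := thick_bridge_min thK gab; lra.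
Qed.

Lemma thick_shift K p q tau s : thick K p q tau -> 0 < tau ->
  thick [set x + s | x in K] (p + s) (q + s) tau.
Proof.
move=> thK tau0.
have := thick_image (phi := fun x => x + s) thK tau0 ltr01 (lexx 1).
rewrite mulr1 divr1; apply.
- by move=> u v _ _ _; split; lra.
- by move=> x _; apply: continuousD; [exact: cvg_id | exact: cvg_cst].
Qed.

Lemma powR_lipschitz p q beta u v : 0 < p -> 1 <= beta -> p <= u -> u <= v -> v <= q ->
  beta * p `^ (beta - 1) * (v - u) <= v `^ beta - u `^ beta /\
  v `^ beta - u `^ beta <= beta * q `^ (beta - 1) * (v - u).
Proof.
move=> p0 beta1 pu; rewrite le_eqVlt => /predU1P[<- _|uv vq].
  by rewrite !subrr !mulr0 lexx.
have u0 : 0 < u := lt_le_trans p0 pu.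
have [c + ->] : exists2 c, c \in `]u, v[ &
    v `^ beta - u `^ beta = beta * c `^ (beta - 1) * (v - u).
  apply: (@MVT _ (fun x => x `^ beta) (fun x => beta * x `^ (beta - 1))) => //.
  - move=> x; rewrite in_itv /= => /andP[ux _]; apply: is_derive1_powR.
    exact: lt_trans u0 ux.
  - apply: derivable_within_continuous => x; rewrite in_itv /= => /andP[ux _].
    by apply: derivable_powR; rewrite in_itv /= andbT; exact: lt_le_trans u0 ux.
rewrite in_itv /= => /andP[uc cv].
have beta0 : 0 < beta := lt_le_trans ltr01 beta1.
have c0 : 0 < c := lt_trans u0 uc.
have e0 : 0 <= beta - 1 by rewrite subr_ge0.
by split; rewrite ler_pM2r ?subr_gt0 // ler_pM2l //; apply: ge0_ler_powR;
  rewrite // ?nnegrE; lra.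
Qed.

Lemma powR_continuous_at beta x : 0 < x -> {for x, continuous (fun z : R => z `^ beta)}.
Proof.
move=> x0; apply: differentiable_continuous; apply/derivable1_diffP.
by apply: derivable_powR; rewrite in_itv /= andbT.
Qed.

Lemma thick_powR K p q tau beta : thick K p q tau -> 0 < tau -> 0 < p -> 1 <= beta ->
  thick [set x `^ beta | x in K] (p `^ beta) (q `^ beta)
    (tau * p `^ (beta - 1) / q `^ (beta - 1)).
Proof.
move=> thK tau0 p0 beta1; have beta0 : 0 < beta := lt_le_trans ltr01 beta1.
have /andP[_ pq] := thick_bounds thK (thick_min thK).
have q0 : 0 < q := lt_le_trans p0 pq.
have m0 : 0 < beta * p `^ (beta - 1) by rewrite mulr_gt0 ?powR_gt0.
have mM : beta * p `^ (beta - 1) <= beta * q `^ (beta - 1).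
  by rewrite ler_pM2l //; apply: ge0_ler_powR; rewrite // ?nnegrE ?subr_ge0 //; lra.
have := thick_image (phi := fun z => z `^ beta) thK tau0 m0 mM.
rewrite (_ : tau * _ / _ = tau * p `^ (beta - 1) / q `^ (beta - 1)); last first.
  by field; rewrite !gt_eqF ?powR_gt0.
apply.
- by move=> u v pu uv vq; exact: powR_lipschitz.
- move=> x Kx; apply: powR_continuous_at.
  by have /andP[px _] := thick_bounds thK Kx; exact: lt_le_trans p0 px.
Qed.

End ThickImages.

Section Bridges.
Variables (R : realType) (C : set R).
Hypotheses (ubC : has_ubound C) (lbC : has_lbound C).
Implicit Types (a b l r : R).

Let right_ends a b := [set l - b | l in [set l | exists r, is_gap C l r /\ b <= l /\ b - a <= r - l]]
  `|` [set sup C - b].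

Let left_ends a b := [set r | exists l, is_gap C l r /\ r <= a /\ b - a <= r - l] `|` [set inf C].

Lemma right_ends_ge0 a b : is_gap C a b -> lbound (right_ends a b) 0.
Proof.
move=> gab _ [[l [r [_ [bl _]]] <-]|->]; rewrite subr_ge0 //.
exact: ub_le_sup (gap_memR gab).
Qed.

Lemma right_bridge_ge0 a b : is_gap C a b -> 0 <= right_bridge C a b.
Proof.
by move=> gab; apply: lb_le_inf; [exists (sup C - b); right | exact: right_ends_ge0].
Qed.

Lemma right_bridge_le a b l r : is_gap C a b -> is_gap C l r -> b <= l -> b - a <= r - l ->
  right_bridge C a b <= l - b.
Proof.
move=> gab glr bl ab_lr; apply: ge_inf; first by exists 0; exact: right_ends_ge0.
by left; exists l => //; exists r.
Qed.

Lemma left_ends_le a b : is_gap C a b -> ubound (left_ends a b) a.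
Proof. by move=> gab _ [[l [_ []]]//|->]; exact: ge_inf (gap_memL gab). Qed.

Lemma left_bridge_ge0 a b : is_gap C a b -> 0 <= left_bridge C a b.
Proof.
move=> gab; rewrite subr_ge0; apply: ge_sup; first by exists (inf C); right.
exact: left_ends_le.
Qed.

Lemma left_bridge_le a b l r : is_gap C a b -> is_gap C l r -> b <= l -> r - l <= b - a ->
  left_bridge C l r <= l - b.
Proof.
move=> gab glr bl lr_ab; rewrite /left_bridge lerD2l lerN2.
by apply: ub_le_sup; [exists l; exact: left_ends_le | left; exists a].
Qed.

Lemma thickness_le_bridges a b : is_gap C a b ->
  thickness C * (b - a) <= right_bridge C a b /\ thickness C * (b - a) <= left_bridge C a b.
Proof.
move=> gab; have ba : 0 < b - a by rewrite subr_gt0 (gap_lt gab).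
have ratios_ge0 : lbound [set x | exists a b, is_gap C a b /\
    (x = right_bridge C a b / (b - a) \/ x = left_bridge C a b / (b - a))] 0.
  move=> x [a' [b' [g' ratio]]]; have ba' : 0 <= b' - a' by rewrite subr_ge0 ltW // (gap_lt g').
  case: ratio => ->; apply: divr_ge0 => //; [exact: right_bridge_ge0 | exact: left_bridge_ge0].
split; rewrite -ler_pdivlMr //; apply: ge_inf; try by exists 0.
- by exists a, b; split => //; left.
- by exists a, b; split => //; right.
Qed.

Lemma thickness_gaps_separated : 0 <= thickness C -> gaps_separated C (thickness C).
Proof.
move=> tau0 a b l r x gab glr bl xab xlr.
have [ab_lr|lr_ab] := leP (b - a) (r - l).
- have [+ _] := thickness_le_bridges gab; have := right_bridge_le gab glr bl ab_lr.
  have : thickness C * x <= thickness C * (b - a) by rewrite ler_wpM2l.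
  lra.
- have [_ +] := thickness_le_bridges glr; have := left_bridge_le gab glr bl (ltW lr_ab).
  have : thickness C * x <= thickness C * (r - l) by rewrite ler_wpM2l.
  lra.
Qed.

End Bridges.

Lemma exists_first_long_gap (R : realType) (K : set R) b lam : 0 < lam ->
  (exists l r, [/\ is_gap K l r, b <= l & lam <= r - l]) ->
  exists q r, [/\ is_gap K q r, b <= q, lam <= r - q &
    forall l r', is_gap K l r' -> b <= l -> lam <= r' - l -> q <= l].
Proof.
move=> lam0 [l0 [r0 [g0 bl0 lam_0]]].
pose S := [set l | exists r, [/\ is_gap K l r, b <= l & lam <= r - l]].
have infS : has_inf S by split; [exists l0, r0 | exists b => l [r []]].
have [q [rq [gq bq lam_q]] q_lt] := inf_adherent lam0 infS.
exists q, rq; split => // l r glr bl lam_lr; rewrite leNgt; apply/negP => lq.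
have := gap_disjoint glr gq lq; have : inf S <= l by apply: ge_inf; [case: infS | exists r].
lra.
Qed.

Section Pieces.
Variables (R : realType) (C : set R) (tau : R).
Hypotheses (cantorC : is_cantor_set C) (tau_gt0 : 0 < tau) (sepC : gaps_separated C tau).
Implicit Types (a b c l r p q t x y z e rho : R).

Let compactC : compact C. Proof. by case: cantorC. Qed.

Let closedC : closed C. Proof. exact: compact_closed (@Rhausdorff R) compactC. Qed.

Lemma cantor_near_point z e : C z -> 0 < e -> exists y, [/\ y != z, C y & `|z - y| < e].
Proof.
case: cantorC => _ _ [_ limC] _ Cz e0.
have : limit_point C z by rewrite limC.
by move/(_ _ (nbhsx_ballx z e e0)) => [y [yz Cy zy]]; exists y.
Qed.

Lemma cantor_gap_between x y : C x -> C y -> x < y ->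
  exists a b, [/\ is_gap C a b, x <= a & b <= y].
Proof.
move=> Cx Cy xy.
have [[w [xwy nCw]]|no_gap] := pselect (exists w, x < w < y /\ ~ C w).
  by have [a [b [gab xa _ _ by_]]] := exists_gap_around closedC Cx Cy xwy nCw; exists a, b.
case: cantorC => _ _ _ discC; have sub : `[x, y] `<=` C.
  move=> w; rewrite /= in_itv /= => /andP[xw wy].
  have [->|wx] := eqVneq w x; first by [].
  have [->|wy'] := eqVneq w y; first by [].
  apply: contrapT => nCw; apply: no_gap; exists w; split => //.
  by rewrite !lt_neqAle xw wy eq_sym wx wy'.
have : connected_component C x y.
  exists `[x, y]%classic; last by rewrite /= in_itv /= (ltW xy) lexx.
  split => //; first by rewrite /= in_itv /= lexx (ltW xy).
  by apply/connected_intervalP; exact: interval_is_interval.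
by rewrite discC // => yx; move: xy; rewrite yx ltxx.
Qed.

Lemma thick_subpiece a b c : is_gap C a b -> C c -> b < c ->
  exists q, [/\ b < q, q <= c & thick (C `&` `[b, q]) b q tau].
Proof.
move=> gab Cc bc; have [l0 [r0 [g0 bl0 r0c]]] := cantor_gap_between (gap_memR gab) Cc bc.
pose lam := Num.min (b - a) (r0 - l0).
have lam0 : 0 < lam by rewrite lt_min !subr_gt0 (gap_lt gab) (gap_lt g0).
have lam_ab : lam <= b - a by rewrite ge_min lexx.
have lam_0 : lam <= r0 - l0 by rewrite ge_min lexx orbT.
have [q [rq [gq bq lam_q first]]] := exists_first_long_gap lam0 (ex_intro _ l0 (ex_intro _ r0 (And3 g0 bl0 lam_0))).
have short l r : is_gap C l r -> b <= l -> r <= q -> r - l < lam.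
  move=> glr bl rq'; rewrite ltNge; apply/negP => /(first _ _ glr bl).
  by have := gap_lt glr; lra.
have b_q : b < q.
  rewrite lt_neqAle bq andbT; apply/eqP => bqE; subst q.
  by have := sepC gab gq (lexx b) lam_ab lam_q; have := mulr_gt0 tau_gt0 lam0; lra.
exists q; split => //.
  exact: le_trans (first _ _ g0 bl0 lam_0) (le_trans (ltW (gap_lt g0)) r0c).
split.
- exact: compact_closedI compactC (@itv_closed _ _ b q).
- by split; [exact: gap_memR gab | rewrite /= in_itv /= lexx ltW].
- by split; [exact: gap_memL gq | rewrite /= in_itv /= lexx ltW].
- by move=> x [].
- by move=> a' b' l r x /gap_restrict[g1 _ _] /gap_restrict[g2 _ _]; exact: sepC.
- move=> l r /gap_restrict[glr bl rq']; have := short l r glr bl rq'.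
  by move=> /ltW lr_lam; apply: sepC gab glr bl _ (lexx _); exact: le_trans lam_ab.
- move=> l r /gap_restrict[glr bl rq']; have := short l r glr bl rq'.
  by move=> /ltW lr_lam; apply: sepC glr gq rq' (lexx _) _; exact: le_trans lam_q.
Qed.


Lemma cantor_gap_near z e : C z -> 0 < e ->
  exists a b, [/\ is_gap C a b, z - e < a & b < z + e].
Proof.
move=> Cz e0; have [y [yz Cy zy]] := cantor_near_point Cz e0.
move: zy; rewrite ltr_norml => /andP[zy1 zy2].
have [y_z|z_y] := ltP y z.
  by have [a [b [gab ya bz]]] := cantor_gap_between Cy Cz y_z; exists a, b; split => //; lra.
have {}z_y : z < y by rewrite lt_neqAle eq_sym yz.
by have [a [b [gab za by_]]] := cantor_gap_between Cz Cy z_y; exists a, b; split => //; lra.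
Qed.

Lemma cantor_point_after_gap a b e : is_gap C a b -> 0 < e ->
  exists c, [/\ C c, b < c & c < b + e].
Proof.
move=> gab e0; have ab := gap_lt gab.
have m0 : 0 < Num.min e (b - a) by rewrite lt_min e0 subr_gt0.
have [c [cb Cc]] := cantor_near_point (gap_memR gab) m0.
rewrite lt_min !ltr_norml => /andP[/andP[h1 h2] /andP[h3 h4]].
have [bc|cb'] := ltP b c; first by exists c; split => //; lra.
have c_b : c < b by rewrite lt_neqAle cb cb'.
by exfalso; have [_ _ _ nK] := gab; apply: (nK c) _ Cc; rewrite c_b andbT; lra.
Qed.

Lemma thick_piece_near z e : C z -> 0 < e ->
  exists p q, [/\ z - e < p, p < q, q < z + e & thick (C `&` `[p, q]) p q tau].
Proof.
move=> Cz e0; have e2 : 0 < e / 2 by rewrite divr_gt0.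
have [a [b [gab za bz]]] := cantor_gap_near Cz e2.
have [c [Cc bc cb]] := cantor_point_after_gap gab e2.
have [q [bq qc thP]] := thick_subpiece gab Cc bc.
by exists b, q; split => //; have := gap_lt gab; lra.
Qed.

Lemma thick_distances t rho : 1 < rho -> exists K p q,
  [/\ thick K p q tau, 0 < p, p < q, q <= rho * p & K `<=` [set `|c - t| | c in C]].
Proof.
move=> rho1; have [z [Cz zt]] : exists z, C z /\ z != t.
  case: cantorC => [[c0 Cc0] _ _ _]; have [c0t|] := eqVneq c0 t; last by exists c0.
  by have [y [yc0 Cy _]] := cantor_near_point Cc0 ltr01; exists y; rewrite -c0t.
pose d := `|z - t|; have d0 : 0 < d by rewrite normr_gt0 subr_eq0.
pose e := d * (rho - 1) / (rho + 1).
have e0 : 0 < e by rewrite divr_gt0 ?mulr_gt0 //; lra.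
(* a piece within [e] of [z] has its distances to [t] in [[d - e, d + e]], of ratio [rho] *)
have de : d + e = rho * (d - e) by rewrite /e; field; lra.
have ed : e < d by nra.
have [p [q [zp pq qz thP]]] := thick_piece_near Cz e0.
have hullP x : (C `&` `[p, q]) x -> p <= x <= q by case=> _; rewrite /= in_itv.
have [tz|zt'] := ltP t z.
- have dE : d = z - t by rewrite /d gtr0_norm // subr_gt0.
  exists [set x - t | x in C `&` `[p, q]], (p - t), (q - t); split.
  + exact: thick_shift thP tau_gt0.
  + lra.
  + lra.
  + have : rho * (d - e) <= rho * (p - t) by rewrite ler_pM2l; lra.
    lra.
  + move=> _ [x Px <-]; exists x; first by case: Px.
    by have /andP[px xq] := hullP x Px; rewrite gtr0_norm; lra.
- have {zt'}z_t : z < t by rewrite lt_neqAle zt.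
  have dE : d = t - z by rewrite /d ltr0_norm ?subr_lt0 // opprB.
  exists [set y + t | y in [set - x | x in C `&` `[p, q]]], (- q + t), (- p + t); split.
  + exact: thick_shift (thick_opp thP) tau_gt0.
  + lra.
  + lra.
  + have : rho * (d - e) <= rho * (- q + t) by rewrite ler_pM2l; lra.
    lra.
  + move=> _ [_ [x Px <-] <-]; exists x; first by case: Px.
    by have /andP[px xq] := hullP x Px; rewrite ltr0_norm; lra.
Qed.

End Pieces.

Section Powers.
Variable R : realType.
Implicit Types (K : set R) (p q tau alpha beta rho r u a b c w x y : R).

Lemma powRVK alpha w : alpha != 0 -> 0 <= w -> (w `^ alpha^-1) `^ alpha = w.
Proof. by move=> alpha0 w0; rewrite -powRrM mulVf // powRr1. Qed.

Lemma powR_ltr beta x y : 0 < beta -> 0 < x -> x < y -> x `^ beta < y `^ beta.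
Proof.
move=> beta0 x0 xy; apply: gt0_ltr_powR; rewrite // nnegrE ltW //.
exact: lt_trans xy.
Qed.

Lemma powR_exponent_continuous c : 0 < c -> continuous (powR c).
Proof.
move=> c0; have -> : powR c = expR \o (fun b => b * ln c).
  by apply: funext => b; rewrite /powR gt_eqF.
by move=> b; apply: continuous_comp; [exact: mulrr_continuous | exact: continuous_expR].
Qed.

Lemma near_lt (f g : R -> R) (a : R) : {for a, continuous f} -> {for a, continuous g} ->
  f a < g a -> \forall b \near a, f b < g b.
Proof.
move=> cf cg fg; have : \forall b \near a, 0 < (g - f) b.
  by apply: (cvgr_gt (g a - f a) (cvgB cg cf)); rewrite subr_gt0.
by apply: filterS => b /=; rewrite subr_gt0.
Qed.

Lemma near_sum_powR_lt a b c alpha : 0 < a -> 0 < b -> 0 < c ->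
  a `^ alpha + b `^ alpha < c `^ alpha -> \forall beta \near alpha, a `^ beta + b `^ beta < c `^ beta.
Proof.
move=> a0 b0 c0; apply: (@near_lt (fun beta => a `^ beta + b `^ beta) (powR c)).
- by apply: cvgD; exact: powR_exponent_continuous.
- exact: powR_exponent_continuous.
Qed.

Lemma near_powR_lt_sum a b c alpha : 0 < a -> 0 < b -> 0 < c ->
  c `^ alpha < a `^ alpha + b `^ alpha -> \forall beta \near alpha, c `^ beta < a `^ beta + b `^ beta.
Proof.
move=> a0 b0 c0; apply: (@near_lt (powR c) (fun beta => a `^ beta + b `^ beta)).
- exact: powR_exponent_continuous.
- by apply: cvgD; exact: powR_exponent_continuous.
Qed.

Lemma powR_le_ratio (P Q rho tau alpha e : R) : 0 < P -> 0 <= Q -> Q <= rho * P -> 1 <= rho ->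
  0 <= e -> e <= alpha -> rho `^ alpha <= tau -> Q `^ e <= tau * P `^ e.
Proof.
move=> P0 Q0 QrP rho1 e0 ea rho_tau; have rho0 : 0 <= rho by lra.
apply: (@le_trans _ _ ((rho * P) `^ e)).
  by apply: ge0_ler_powR; rewrite ?nnegrE // mulr_ge0 // ltW.
rewrite powRM ?(ltW P0) // ler_wpM2r ?powR_ge0 //.
exact: le_trans (ler_powR rho1 ea) rho_tau.
Qed.

Lemma exists_powR_pair alpha x y : 0 < alpha -> 0 <= x -> x < y ->
  exists r1 r2, [/\ 0 < r1, r1 < r2, x < r1 `^ alpha & r2 `^ alpha < y].
Proof.
move=> alpha0 x0 xy; have ainv0 : 0 < alpha^-1 by rewrite invr_gt0.
have root w : 0 <= w -> (w `^ alpha^-1) `^ alpha = w := powRVK (lt0r_neq0 alpha0).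
have [w10 w12] : 0 < (2 * x + y) / 3 /\ (2 * x + y) / 3 < (x + 2 * y) / 3 by split; lra.
exists (((2 * x + y) / 3) `^ alpha^-1), (((x + 2 * y) / 3) `^ alpha^-1).
split; [exact: powR_gt0 | exact: powR_ltr | rewrite root; lra | rewrite root; lra].
Qed.

Lemma sum_powR_onto K1 K2 p1 q1 p2 q2 tau beta u :
  thick K1 p1 q1 tau -> thick K2 p2 q2 tau -> 0 < tau -> 0 < p1 -> 0 < p2 -> 1 <= beta ->
  q1 `^ (beta - 1) <= tau * p1 `^ (beta - 1) -> q2 `^ (beta - 1) <= tau * p2 `^ (beta - 1) ->
  p1 `^ beta + q2 `^ beta < u -> q1 `^ beta + p2 `^ beta < u -> u < q1 `^ beta + q2 `^ beta ->
  exists2 x, K1 x & exists2 y, K2 y & x `^ beta + y `^ beta = u.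
Proof.
move=> thK1 thK2 tau0 p10 p20 beta1 ratio1 ratio2 h1 h2 h3.
pose t1 := tau * p1 `^ (beta - 1) / q1 `^ (beta - 1).
pose t2 := tau * p2 `^ (beta - 1) / q2 `^ (beta - 1).
have [q10 q20] : 0 < q1 `^ (beta - 1) /\ 0 < q2 `^ (beta - 1).
  have [/andP[_ pq1] /andP[_ pq2]] := (thick_bounds thK1 (thick_min thK1), thick_bounds thK2 (thick_min thK2)).
  by split; apply: powR_gt0; lra.
have t1_ge1 : 1 <= t1 by rewrite ler_pdivlMr // mul1r.
have t2_ge1 : 1 <= t2 by rewrite ler_pdivlMr // mul1r.
have thA := thick_powR thK1 tau0 p10 beta1.
have thB : thick [set y + u | y in [set - x | x in [set y `^ beta | y in K2]]]
    (- q2 `^ beta + u) (- p2 `^ beta + u) t2.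
  by apply: thick_shift; [exact: thick_opp (thick_powR thK2 tau0 p20 beta1) | lra].
have [t10 t20] := (lt_le_trans ltr01 t1_ge1, lt_le_trans ltr01 t2_ge1).
have t12 : 1 <= t1 * t2 by rewrite -[1]mulr1 ler_pM.
have [w [[x K1x xw] [v [z [y K2y yz] zv] vw]]] :=
  gap_lemma thA thB t10 t20 t12 ltac:(lra) ltac:(lra) ltac:(lra).
by exists x => //; exists y => //; lra.
Qed.


Lemma sum_powR_interval K1 K2 p1 q1 p2 q2 tau alpha rho :
  thick K1 p1 q1 tau -> thick K2 p2 q2 tau -> 0 < p1 -> p1 < q1 -> 0 < p2 -> p2 < q2 ->
  0 < tau -> 1 < alpha -> 1 <= rho -> rho `^ alpha <= tau -> q1 <= rho * p1 -> q2 <= rho * p2 ->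
  exists r1 r2, 0 < r1 < r2 /\ \forall beta \near alpha, forall r, r1 < r < r2 ->
    exists2 x, K1 x & exists2 y, K2 y & x `^ beta + y `^ beta = r `^ beta.
Proof.
move=> thK1 thK2 p10 pq1 p20 pq2 tau0 alpha1 rho1 rho_tau qp1 qp2.
have alpha0 : 0 < alpha := lt_trans ltr01 alpha1.
have [q10 q20] := (lt_trans p10 pq1, lt_trans p20 pq2).
set L := Num.max (p1 `^ alpha + q2 `^ alpha) (q1 `^ alpha + p2 `^ alpha).
have L0 : 0 <= L by rewrite le_max addr_ge0 ?powR_ge0.
have LU : L < q1 `^ alpha + q2 `^ alpha by rewrite gt_max ltrD2r ltrD2l !powR_ltr.
have [L1 L2] : p1 `^ alpha + q2 `^ alpha <= L /\ q1 `^ alpha + p2 `^ alpha <= L.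
  by split; rewrite le_max lexx ?orbT.
have [r1 [r2 [r10 r12 Lr1 r2U]]] := exists_powR_pair alpha0 L0 LU.
exists r1, r2; split; first by rewrite r10 r12.
near=> beta => r /andP[r1r rr2].
have beta1 : 1 < beta.
  by near: beta; apply: (@near_lt (fun=> 1) id); [exact: cvg_cst | exact: cvg_id |].
have e_alpha : beta - 1 <= alpha.
  rewrite lerBlDr; apply: ltW; near: beta.
  by apply: (@near_lt id (fun=> alpha + 1)); [exact: cvg_id | exact: cvg_cst | rewrite /= ltrDl].
have beta0 : 0 < beta := lt_trans ltr01 beta1.
have ratio p q : 0 < p -> p < q -> q <= rho * p -> q `^ (beta - 1) <= tau * p `^ (beta - 1).
  move=> p0 pq qp; apply: powR_le_ratio p0 (ltW (lt_trans p0 pq)) qp rho1 _ e_alpha rho_tau.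
  by rewrite subr_ge0 ltW.
apply: (sum_powR_onto thK1 thK2 tau0 p10 p20 (ltW beta1) (ratio _ _ p10 pq1 qp1)
  (ratio _ _ p20 pq2 qp2)).
- apply: lt_trans (powR_ltr beta0 r10 r1r); near: beta.
  by apply: near_sum_powR_lt => //; exact: le_lt_trans L1 Lr1.
- apply: lt_trans (powR_ltr beta0 r10 r1r); near: beta.
  by apply: near_sum_powR_lt => //; exact: le_lt_trans L2 Lr1.
- apply: lt_trans (powR_ltr beta0 (lt_trans r10 r1r) rr2) _; near: beta.
  by apply: near_powR_lt_sum => //; exact: lt_trans r10 r12.
Unshelve. all: by end_near.
Qed.

End Powers.

Lemma cantor_gaps_separated (R : realType) (C : set R) : compact C -> 0 <= thickness C ->
  gaps_separated C (thickness C).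
Proof.
move=> /compact_bounded /ex_strict_bound_gt0 [M _ CM] tau0.
apply: thickness_gaps_separated => //.
- by exists M => x /CM /ltW; apply: le_trans; exact: ler_norm.
- by exists (- M) => x /CM /ltW; rewrite -normrN lerNl; apply: le_trans; exact: ler_norm.
Qed.

Lemma mem_pinned_dist_set (R : realType) (C : set R) (t : R * R) (beta r c1 c2 : R) :
  0 < beta -> 0 <= r -> C c1 -> C c2 ->
  `|c1 - t.1| `^ beta + `|c2 - t.2| `^ beta = r `^ beta -> pinned_dist_set beta C t r.
Proof.
move=> beta0 r0 Cc1 Cc2 sum; exists (c1, c2) => //.
by rewrite /beta_norm /= sum powRAC powRVK ?gt_eqF.
Qed.

Lemma itvoo_sub_interior_neq0 (R : realType) (S : set R) (a b : R) :
  a < b -> `]a, b[%classic `<=` S -> S° !=set0.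
Proof.
move=> ab; rewrite (open_subsetE _ (@itv_open _ _ a b)) => sub.
by exists ((a + b) / 2); apply: sub; rewrite /= in_itv /=; apply/andP; split; lra.
Qed.

Theorem mainTheorem5 (R : realType) (C : set R) (alpha : R) :
  is_cantor_set C -> 1 < thickness C -> 1 < alpha ->
  forall t : R * R,
    (pinned_dist_set alpha C t)° !=set0 /\
    exists delta : R, 0 < delta < alpha /\
      (\bigcap_(beta in [set b : R | alpha - delta < b < alpha + delta])
          pinned_dist_set beta C t)° !=set0.
Proof.
move=> cantorC thick_gt1 alpha_gt1 t; set tau := thickness C.
have [tau0 alpha0] : 0 < tau /\ 0 < alpha by split; exact: lt_trans ltr01 _.
have sepC : gaps_separated C tau by apply: cantor_gaps_separated; [case: cantorC | exact: ltW].
pose rho := tau `^ alpha^-1.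
have rho_tau : rho `^ alpha <= tau by rewrite powRVK ?gt_eqF // ltW.
have ainv0 : 0 < alpha^-1 by rewrite invr_gt0.
have rho1 : 1 < rho by have := powR_ltr ainv0 ltr01 thick_gt1; rewrite powR1.
have [K1 [p1 [q1 [thK1 p10 pq1 qp1 K1C]]]] := thick_distances cantorC tau0 sepC t.1 rho1.
have [K2 [p2 [q2 [thK2 p20 pq2 qp2 K2C]]]] := thick_distances cantorC tau0 sepC t.2 rho1.
have [r1 [r2 [/andP[r10 r12]]]] := sum_powR_interval thK1 thK2 p10 pq1 p20 pq2 tau0
  alpha_gt1 (ltW rho1) rho_tau qp1 qp2.
move=> /nbhs_ballP[e e0 sol]; pose delta := Num.min e 1.
have delta0 : 0 < delta by rewrite lt_min e0 ltr01.
have [delta_e delta1] : delta <= e /\ delta <= 1 by split; rewrite ge_min lexx ?orbT.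
have dist_itv beta : alpha - delta < beta < alpha + delta ->
    `]r1, r2[%classic `<=` pinned_dist_set beta C t.
  move=> beta_near r; rewrite /= in_itv /= => r_itv.
  have /sol/(_ r r_itv)[x /K1C[c1 Cc1 <-] [y /K2C[c2 Cc2 <-] sum]] : ball alpha e beta.
    by rewrite /ball /= ltr_distlC; case/andP: beta_near => *; apply/andP; split; lra.
  by apply: mem_pinned_dist_set Cc1 Cc2 sum; case/andP: beta_near => *; lra.
split; first by apply: itvoo_sub_interior_neq0 r12 (dist_itv _ _); apply/andP; split; lra.
exists delta; split; first by rewrite delta0; lra.
by apply: itvoo_sub_interior_neq0 r12 _ => r r_itv beta /dist_itv; apply.
Qed.
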